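(* Let $G$ be a connected graph associated with a succinct representation $\mathcal{G}=(H,\{(\ell_i,S_i)\mid 1\le i\le r\})$ where $H$ consists of a single vertex $v$. Then $\mathcal{I}(G)\ge \sum_{i=1}^r\gamma(\ell_i)+\sum_{i=1}^r(\ell_i \bmod 2)$, where $\gamma(\ell)=\ell^2/2$ if $\ell$ is even and $\gamma(\ell)=(\ell^2-1)/2$ if $\ell$ is odd.
   Context: All graphs are finite, simple and undirected. For an ordering $\sigma$ of $V(G)$ and $u\in V(G)$, $N_L(u,\sigma)$ and $N_R(u,\sigma)$ are the sets of neighbours of $u$ preceding and following $u$; $\mathcal{I}(u,\sigma)=\big||N_L(u,\sigma)|-|N_R(u,\sigma)|\big|$, $\mathcal{I}(\sigma)=\sum_u\mathcal{I}(u,\sigma)$, and $\mathcal{I}(G)=\min_\sigma\mathcal{I}(\sigma)$. A succinct representation is a tuple $(H,\{(\ell_i,S_i)\mid 1\le i\le r\})$ where $H$ is a graph, each $\ell_i$ is a positive integer and $S_i\subseteq V(H)$; its associated graph $G$ has vertex set $V(H)\cup C_1\cup\dots\cup C_r$ (pairwise disjoint, $|C_i|=\ell_i$), with edges: those of $H$ on $V(H)$, all edges within each $C_i$, no edges between distinct $C_i$'s, and $w\in V(H)$ adjacent to every vertex of $C_i$ iff $w\in S_i$ (and to none otherwise). *)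

From mathcomp Require Import all_boot.
Set Implicit Arguments. Unset Strict Implicit. Unset Printing Implicit Defensive.

(* Vertex type of the graph associated with a succinct representation
   (H, {(l_i, S_i) | i < r}): V(H) + disjoint union of cliques C_i, |C_i| = l_i. *)
Definition sr_vertex (TH : finType) (r : nat) (l : 'I_r -> nat) : finType :=
  (TH + {i : 'I_r & 'I_(l i)})%type.

Arguments sr_vertex : clear implicits.
Definition sr_adj (TH : finType) (H : rel TH) (r : nat) (l : 'I_r -> nat)
    (S : 'I_r -> {set TH}) : rel (sr_vertex TH r l) :=
  fun x y =>
    match x, y with
    | inl a, inl b => H a b
    | inr p, inr q => (tag p == tag q) && (p != q)
    | inl a, inr q => a \in S (tag q)
    | inr p, inl b => b \in S (tag p)
    end.

Definition graph_connected (T : finType) (e : rel T) : Prop :=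
  forall x y : T, connect e x y.

(* An ordering of V is a bijection V -> {0,..,|V|-1} (position of each vertex);
   represented as an injective finite function. *)
Definition is_ordering (T : finType) (s : {ffun T -> 'I_#|T|}) : bool :=
  injectiveb s.

Definition NL (T : finType) (e : rel T) (s : {ffun T -> 'I_#|T|}) (u : T) : {set T} :=
  [set w | e u w & (s w < s u)%N].
Definition NR (T : finType) (e : rel T) (s : {ffun T -> 'I_#|T|}) (u : T) : {set T} :=
  [set w | e u w & (s u < s w)%N].

Definition vertex_imbalance (T : finType) (e : rel T) (s : {ffun T -> 'I_#|T|}) (u : T) : nat :=
  (#|NL e s u| - #|NR e s u|) + (#|NR e s u| - #|NL e s u|).

Definition ordering_imbalance (T : finType) (e : rel T) (s : {ffun T -> 'I_#|T|}) : nat :=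
  \sum_(u : T) vertex_imbalance e s u.

(* I(G) = min over orderings; [finfun enum_rank] is an ordering so the min is
   over a nonempty set. *)
Definition graph_imbalance (T : finType) (e : rel T) : nat :=
  ordering_imbalance e
    [arg min_(s < [ffun x => enum_rank x] | is_ordering s) ordering_imbalance e s].

Definition gamma (l : nat) : nat :=
  if odd l then (l ^ 2 - 1) %/ 2 else l ^ 2 %/ 2.

Arguments sr_adj {TH} H {r} l S.

From mathcomp Require Import all_boot zify.

(* Connectivity forces the unique vertex v of H into every S_i, so each
   C_i + v is a clique on l_i + 1 vertices and the neighbours of u in C_i are
   the other vertices of that clique.  If u has rank k in this clique under
   the ordering, then I(u) = |k - (l_i - k)|.  The ranks of the clique's
   vertices are exactly 0, ..., l_i, and sum_(k <= l) |2k - l| equals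
   gamma(l) + (l mod 2) + l; discarding the term of v, which is at most l_i,
   leaves gamma(l_i) + (l_i mod 2) for the vertices of C_i. *)

Definition absdiff (m n : nat) : nat := (m - n) + (n - m).

Lemma absdiffSS m n : absdiff m.+1 n.+1 = absdiff m n.
Proof. by rewrite /absdiff !subSS. Qed.

Lemma gammaSS l : gamma l.+2 = gamma l + l.*2 + 2.
Proof.
rewrite /gamma /= negbK.
have -> : l.+2 ^ 2 = l ^ 2 + 4 * l + 4 by rewrite !expnS expn0; lia.
have : odd l -> 0 < l ^ 2 by rewrite expn_gt0; case: l.
case: (odd l); move: (l ^ 2) => a; lia.
Qed.

Lemma sum_absdiff_complement l :
  \sum_(k < l.+1) absdiff k (l - k) = gamma l + l %% 2 + l.
Proof.
elim/ltn_ind: l => -[|[|l]] IH; first by rewrite big_ord_recr big_ord0.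
  by rewrite !big_ord_recr big_ord0.
rewrite big_ord_recl big_ord_recr /=.
under eq_bigr => k _ do rewrite /bump /= add1n subSS (subSn (leq_ord k)) absdiffSS.
rewrite IH // gammaSS /absdiff /bump /=; lia.
Qed.

Section Rank.
Context {T : finType} (f : T -> nat).

Definition rank_in (A : {set T}) (w : T) : nat := #|[set x in A | f x < f w]|.

Lemma rank_in_lt (A : {set T}) w : w \in A -> rank_in A w < #|A|.
Proof.
move=> wA; rewrite (cardsD1 w A) wA add1n ltnS subset_leq_card //.
apply/subsetP => x; rewrite !inE => /andP[-> ltxw]; rewrite andbT.
by apply: contraTneq ltxw => ->; rewrite ltnn.
Qed.

Hypothesis f_inj : injective f.

Lemma card_below_above (A : {set T}) w : w \notin A ->
  #|[set x in A | f x < f w]| + #|[set x in A | f w < f x]| = #|A|.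
Proof.
move=> wA; rewrite -(cardsID [set x | f x < f w] A).
congr (_ + _); apply: eq_card => x; rewrite !inE; first by rewrite andbC.
case xA: (x \in A); rewrite ?andbF //= andbT -leqNgt ltn_neqAle (inj_eq f_inj).
by have -> : w != x by apply: contraNneq wA => ->.
Qed.

Lemma rank_in_max {A : {set T}} {m : T} : m \in A -> {in A, forall w, f w <= f m} ->
  rank_in A m = #|A :\ m| /\ {in A :\ m, forall w, rank_in (A :\ m) w = rank_in A w}.
Proof.
move=> mA m_max; split=> [|w /setD1P[wm wA]]; apply: eq_card => x; rewrite !inE.
  by case xA: (x \in A); rewrite ?andbF //= ltn_neqAle (inj_eq f_inj) m_max.
by case: eqVneq => [->|] //=; rewrite mA ltnNge m_max.
Qed.

Lemma sum_rank_in (g : nat -> nat) (A : {set T}) :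
  \sum_(w in A) g (rank_in A w) = \sum_(k < #|A|) g k.
Proof.
move Ha: #|A| => n; elim: n A Ha => [|n IH] A Ha.
  by rewrite big_ord0 (cards0_eq Ha) big_set0.
have /card_gt0P[x0 x0A] : 0 < #|A| by rewrite Ha.
have [m mA m_max] := arg_maxnP f x0A; rewrite -/(m \in A) in mA.
have Am : #|A :\ m| = n by move: (cardsD1 m A); rewrite mA Ha add1n => -[].
have [rank_m rank_rest] := rank_in_max mA m_max.
rewrite (bigD1 m mA) big_ord_recr /= addnC rank_m Am -(IH _ Am).
congr (_ + _); apply: eq_big => [w|w]; first by rewrite in_setD1 andbC.
by move=> wAm; rewrite rank_rest // in_setD1 andbC.
Qed.

End Rank.

Arguments card_below_above {T f} f_inj {A w}.
Arguments sum_rank_in {T f} f_inj g A.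

Lemma graph_imbalance_attained {T : finType} (e : rel T) :
  exists2 s : {ffun T -> 'I_#|T|},
    injective s & graph_imbalance e = ordering_imbalance e s.
Proof.
have rank_ordering : is_ordering [ffun x : T => enum_rank x].
  by apply/injectiveP => x y; rewrite !ffunE; apply: enum_rank_inj.
rewrite /graph_imbalance.
case: (arg_minnP (ordering_imbalance e) rank_ordering) => s /injectiveP s_inj _.
by exists s.
Qed.

Section SuccinctGraph.
Context {TH : finType} {H : rel TH} {r : nat} {l : 'I_r -> nat} {S : 'I_r -> {set TH}}.
Local Notation V := (sr_vertex TH r l).
Local Notation e := (sr_adj H l S).
Local Notation clique_vertex j := (inr (Tagged (fun k => 'I_(l k)) j) : V).

Lemma sum_cliques_le (F : V -> nat) :
  \sum_(i < r) \sum_(j < l i) F (clique_vertex j) <= \sum_x F x.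
Proof.
rewrite (sig_big_dep xpredT (fun _ _ => true) (fun i j => F (clique_vertex j))).
rewrite big_sumType /=; apply: leq_trans (leq_addl _ _).
by apply: eq_leq; apply: eq_big => // -[].
Qed.

Definition block (i : 'I_r) : {set V} :=
  [set x : V | if x is inr p then tag p == i else true].

Lemma sum_block i (F : V -> nat) :
  \sum_(x in block i) F x = \sum_a F (inl a) + \sum_(j < l i) F (clique_vertex j).
Proof.
rewrite big_sumType /=; congr (_ + _); first by apply: eq_bigl => a; rewrite inE.
rewrite -(big_pred1_eq addn i (fun k => \sum_(j < l k) F (clique_vertex j))).
rewrite (sig_big_dep (pred1 i) (fun _ _ => true) (fun k j => F (clique_vertex j))).
by apply: eq_big => [[k j]|[k j]] //=; rewrite inE andbT.
Qed.

Lemma card_block i : #|block i| = #|TH| + l i.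
Proof. by rewrite -sum1_card sum_block !sum1_card card_ord. Qed.

Lemma connected_S_neq0 (a : TH) i : graph_connected e -> 0 < l i -> S i != set0.
Proof.
move=> conn l_gt0; apply: contraTneq (conn (clique_vertex (Ordinal l_gt0)) (inl a)) => S0.
pose Ci := [pred x : V | if x is inr p then tag p == i else false].
have Ci_closed : closed e Ci.
  move=> [b|p] [c|q]; rewrite !inE //=.
  - by case: (tag q =P i) => [->|//]; rewrite S0 inE.
  - by case: (tag p =P i) => [->|//]; rewrite S0 inE.
  - by case/andP => /eqP ->.
by apply/negP => /(closed_connect Ci_closed); rewrite !inE /= eqxx.
Qed.

Section Ordering.
Context {s : {ffun V -> 'I_#|V|}}.
Hypotheses (s_inj : injective s) (S_full : forall i, S i = setT).
Local Notation rank := (rank_in (fun x => nat_of_ord (s x))).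

Lemma s_val_inj : injective (fun x => nat_of_ord (s x)).
Proof. exact: inj_comp val_inj s_inj. Qed.

Lemma adj_clique_vertex i (j : 'I_(l i)) x :
  e (clique_vertex j) x = (x \in block i :\ clique_vertex j).
Proof.
case: x => [a|p]; rewrite !inE /= ?S_full ?inE //.
by rewrite (inj_eq (@inr_inj _ _)) [i == _]eq_sym andbC eq_sym.
Qed.

Lemma vertex_imbalance_clique i (j : 'I_(l i)) (u := clique_vertex j) :
  vertex_imbalance e s u = absdiff (rank (block i) u) (#|block i|.-1 - rank (block i) u).
Proof.
have u_in : u \in block i by rewrite /u inE.
have NL_below : NL e s u = [set x in block i :\ u | s x < s u].
  by apply/setP => x; rewrite /NL [in LHS]in_set [in RHS]in_set adj_clique_vertex.
have NR_above : NR e s u = [set x in block i :\ u | s u < s x].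
  by apply/setP => x; rewrite /NR [in LHS]in_set [in RHS]in_set adj_clique_vertex.
have rank_u : rank (block i) u = #|NL e s u|.
  rewrite NL_below; apply: eq_card => x; rewrite !inE.
  by case: eqVneq => // ->; rewrite ltnn andbF.
have := card_below_above s_val_inj (negbT (setD11 u (block i))).
rewrite -NL_below -NR_above [#|block i|](cardsD1 u) u_in rank_u.
rewrite /vertex_imbalance /absdiff; lia.
Qed.

Lemma sum_clique_imbalance_ge i : #|TH| = 1 ->
  gamma (l i) + l i %% 2 <= \sum_(j < l i) vertex_imbalance e s (clique_vertex j).
Proof.
move=> TH1; have card_block_i : #|block i| = (l i).+1 by rewrite card_block TH1.
pose g k := absdiff k (l i - k).
have hub_le : \sum_a g (rank (block i) (inl a)) <= l i.
  rewrite -[l i]mul1n -TH1 -sum_nat_const; apply: leq_sum => a _.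
  have := rank_in_lt (fun x => nat_of_ord (s x)) (block i) (inl a).
  by rewrite inE card_block_i ltnS /g /absdiff => /(_ isT); lia.
rewrite (eq_bigr (fun j => g (rank (block i) (clique_vertex j)))) => [|j _]; last first.
  by rewrite vertex_imbalance_clique card_block_i succnK.
have := sum_absdiff_complement (l i).
rewrite -card_block_i -(sum_rank_in s_val_inj g) sum_block.
(* Folding the sums lets lia identify their convertible copies. *)
set hub := \sum_a _ in hub_le *; set clique := \sum_(j < l i) _; lia.
Qed.

End Ordering.
End SuccinctGraph.

Theorem proposition2 (TH : finType) (H : rel TH)
    (H_sym : symmetric H) (H_irr : irreflexive H) (H_single : #|TH| = 1)
    (r : nat) (l : 'I_r -> nat) (l_pos : forall i, (0 < l i)%N)
    (S : 'I_r -> {set TH})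
    (G_conn : graph_connected (sr_adj H l S)) :
  (\sum_(i < r) gamma (l i) + \sum_(i < r) (l i %% 2) <= graph_imbalance (sr_adj H l S))%N.
Proof.
have [v _] := fintype1 H_single.
have S_full i : S i = setT.
  apply/eqP; rewrite eqEcard subsetT cardsT H_single card_gt0.
  exact: connected_S_neq0 v i G_conn (l_pos i).
have [s s_inj ->] := graph_imbalance_attained (sr_adj H l S).
rewrite -big_split /=; apply: leq_trans (sum_cliques_le _).
by apply: leq_sum => i _; apply: sum_clique_imbalance_ge s_inj S_full i H_single.
Qed.
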